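(* There are strictly more first-order-expressible node properties expressible in $\mathsf{inf}\text{-}\mathrm{C}^2$ than properties expressible in $\mathrm{C}^2$: every property expressible in $\mathrm{C}^2$ is expressible both in first-order logic and in $\mathsf{inf}\text{-}\mathrm{C}^2$, but there is a property expressible both in first-order logic and in $\mathsf{inf}\text{-}\mathrm{C}^2$ that is not expressible in $\mathrm{C}^2$. This holds both over directed graphs and over undirected graphs.
   Context: A directed graph of dimension $d$ is $G=(V,E,\lambda)$ with $V$ finite, $E\subseteq V\times V$ without loops, $\lambda:V\to\{0,1\}^d$, viewed as a first-order structure with relation $E$ and unary predicates $P_i=\{v:\lambda(v)_i=1\}$; undirected graphs are those with symmetric $E$. A (node) property assigns a truth value to each node of each graph and is expressible in a logic if some formula $\varphi(x)$ of that logic with one free variable satisfies: $G\models\varphi(v)$ iff the property holds at $v$ in $G$, for all graphs $G$ (of the class considered) and nodes $v$. $\mathrm{C}^2$ is the fragment of first-order logic with equality using only the two variables $x,y$ but allowing counting quantifiers $\exists_k$ for every $k\in\mathbb{N}$ (''there exist at least $k$ distinct elements such that''). $\mathsf{inf}\text{-}\mathrm{C}^2$ is the extension of $\mathrm{C}^2$ allowing infinitary conjunctions and disjunctions (still using only the variables $x,y$). *)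

From mathcomp Require Import all_boot.
Set Implicit Arguments. Unset Strict Implicit. Unset Printing Implicit Defensive.

Record graph (d : nat) (V : finType) := Graph {
  edge : rel V;
  label : V -> 'I_d -> bool;
  edge_noloop : irreflexive edge }.

Definition gclass (d : nat) := forall V : finType, graph d V -> Prop.
Definition all_graphs (d : nat) : gclass d := fun V G => True.
Definition undirected_graphs (d : nat) : gclass d :=
  fun V G => symmetric (edge G).

Definition node_property (d : nat) :=
  forall V : finType, graph d V -> V -> Prop.

Inductive FO (d : nat) : Type :=
  | FO_E : nat -> nat -> FO d
  | FO_P : 'I_d -> nat -> FO d
  | FO_Eq : nat -> nat -> FO d
  | FO_Not : FO d -> FO d
  | FO_And : FO d -> FO d -> FO d
  | FO_Or : FO d -> FO d -> FO d
  | FO_Ex : nat -> FO d -> FO d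
  | FO_All : nat -> FO d -> FO d.

Definition upd (X V : Type) (eqX : X -> X -> bool) (a : X -> V) (x : X) (u : V) : X -> V :=
  fun z => if eqX z x then u else a z.

Fixpoint FO_sat d (V : finType) (G : graph d V) (a : nat -> V) (f : FO d) : Prop :=
  match f with
  | FO_E x y => edge G (a x) (a y)
  | FO_P i x => label G (a x) i
  | FO_Eq x y => a x = a y
  | FO_Not g => ~ FO_sat G a g
  | FO_And g h => FO_sat G a g /\ FO_sat G a h
  | FO_Or g h => FO_sat G a g \/ FO_sat G a h
  | FO_Ex x g => exists u, FO_sat G (upd eqn a x u) g
  | FO_All x g => forall u, FO_sat G (upd eqn a x u) g
  end.

Fixpoint FO_free d (f : FO d) (z : nat) : Prop :=
  match f with
  | FO_E x y => z = x \/ z = y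
  | FO_P _ x => z = x
  | FO_Eq x y => z = x \/ z = y
  | FO_Not g => FO_free g z
  | FO_And g h | FO_Or g h => FO_free g z \/ FO_free h z
  | FO_Ex x g | FO_All x g => z <> x /\ FO_free g z
  end.

Definition var2 := bool.
Definition vx : var2 := false.
Definition vy : var2 := true.

Inductive C2 (d : nat) : Type :=
  | C2_E : var2 -> var2 -> C2 d
  | C2_P : 'I_d -> var2 -> C2 d
  | C2_Eq : var2 -> var2 -> C2 d
  | C2_Not : C2 d -> C2 d
  | C2_And : C2 d -> C2 d -> C2 d
  | C2_Or : C2 d -> C2 d -> C2 d
  | C2_Ex : var2 -> C2 d -> C2 d
  | C2_All : var2 -> C2 d -> C2 d
  | C2_ExK : nat -> var2 -> C2 d -> C2 d.

Definition at_least (V : finType) (k : nat) (Q : V -> Prop) : Prop :=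
  exists S : {set V}, k <= #|S| /\ forall u, u \in S -> Q u.

Fixpoint C2_sat d (V : finType) (G : graph d V) (a : var2 -> V) (f : C2 d) : Prop :=
  match f with
  | C2_E x y => edge G (a x) (a y)
  | C2_P i x => label G (a x) i
  | C2_Eq x y => a x = a y
  | C2_Not g => ~ C2_sat G a g
  | C2_And g h => C2_sat G a g /\ C2_sat G a h
  | C2_Or g h => C2_sat G a g \/ C2_sat G a h
  | C2_Ex x g => exists u, C2_sat G (upd eqb a x u) g
  | C2_All x g => forall u, C2_sat G (upd eqb a x u) g
  | C2_ExK k x g => at_least k (fun u => C2_sat G (upd eqb a x u) g)
  end.

Fixpoint C2_free d (f : C2 d) (z : var2) : Prop :=
  match f with
  | C2_E x y => z = x \/ z = y
  | C2_P _ x => z = x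
  | C2_Eq x y => z = x \/ z = y
  | C2_Not g => C2_free g z
  | C2_And g h | C2_Or g h => C2_free g z \/ C2_free h z
  | C2_Ex x g | C2_All x g | C2_ExK _ x g => z <> x /\ C2_free g z
  end.

Inductive IC2 (d : nat) : Type :=
  | I_E : var2 -> var2 -> IC2 d
  | I_P : 'I_d -> var2 -> IC2 d
  | I_Eq : var2 -> var2 -> IC2 d
  | I_Not : IC2 d -> IC2 d
  | I_And : IC2 d -> IC2 d -> IC2 d
  | I_Or : IC2 d -> IC2 d -> IC2 d
  | I_BigAnd : forall J : Type, (J -> IC2 d) -> IC2 d
  | I_BigOr : forall J : Type, (J -> IC2 d) -> IC2 d
  | I_Ex : var2 -> IC2 d -> IC2 d
  | I_All : var2 -> IC2 d -> IC2 d
  | I_ExK : nat -> var2 -> IC2 d -> IC2 d.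

Fixpoint IC2_sat d (V : finType) (G : graph d V) (a : var2 -> V) (f : IC2 d) : Prop :=
  match f with
  | I_E x y => edge G (a x) (a y)
  | I_P i x => label G (a x) i
  | I_Eq x y => a x = a y
  | I_Not g => ~ IC2_sat G a g
  | I_And g h => IC2_sat G a g /\ IC2_sat G a h
  | I_Or g h => IC2_sat G a g \/ IC2_sat G a h
  | I_BigAnd J F => forall i : J, IC2_sat G a (F i)
  | I_BigOr J F => exists i : J, IC2_sat G a (F i)
  | I_Ex x g => exists u, IC2_sat G (upd eqb a x u) g
  | I_All x g => forall u, IC2_sat G (upd eqb a x u) g
  | I_ExK k x g => at_least k (fun u => IC2_sat G (upd eqb a x u) g)
  end.

Fixpoint IC2_free d (f : IC2 d) (z : var2) : Prop :=
  match f with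
  | I_E x y => z = x \/ z = y
  | I_P _ x => z = x
  | I_Eq x y => z = x \/ z = y
  | I_Not g => IC2_free g z
  | I_And g h | I_Or g h => IC2_free g z \/ IC2_free h z
  | I_BigAnd J F | I_BigOr J F => exists i : J, IC2_free (F i) z
  | I_Ex x g | I_All x g | I_ExK _ x g => z <> x /\ IC2_free g z
  end.

Definition FO_expressible d (C : gclass d) (P : node_property d) : Prop :=
  exists phi : FO d, (forall z, FO_free phi z -> z = 0) /\
    forall (V : finType) (G : graph d V), C V G ->
      forall a : nat -> V, FO_sat G a phi <-> P V G (a 0).

Definition C2_expressible d (C : gclass d) (P : node_property d) : Prop :=
  exists phi : C2 d, (forall z, C2_free phi z -> z = vx) /\
    forall (V : finType) (G : graph d V), C V G ->
      forall a : var2 -> V, C2_sat G a phi <-> P V G (a vx).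

Definition IC2_expressible d (C : gclass d) (P : node_property d) : Prop :=
  exists phi : IC2 d, (forall z, IC2_free phi z -> z = vx) /\
    forall (V : finType) (G : graph d V), C V G ->
      forall a : var2 -> V, IC2_sat G a phi <-> P V G (a vx).

Definition strict_gain d (C : gclass d) : Prop :=
  (forall P : node_property d, C2_expressible C P ->
      FO_expressible C P /\ IC2_expressible C P) /\
  (exists P : node_property d,
      FO_expressible C P /\ IC2_expressible C P /\ ~ C2_expressible C P).

Arguments all_graphs d : clear implicits.
Arguments undirected_graphs d : clear implicits.

(* Every C^2 formula is an inf-C^2 formula, and unfolds into first-order logic by
   replacing each counting quantifier [exists_k] with [k] fresh, pairwise distinct
   witnesses.

   The separating property is "the graph is a threshold graph": it is symmetric and
   the neighbourhoods of any two distinct vertices are nested, which is first order.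
   In such a graph adjacency of distinct [u], [w] is decided by a relation
   [R (deg u) (deg w)] monotone in its first argument, and conversely, so the
   property is the infinitary disjunction over all such [R] of a C^2 sentence.

   It is not in C^2.  Let [K] have classes [0 .. 2s], each made of [n + 2] twins,
   with distinct [u], [w] adjacent iff their classes sum to at least [2s + 1]; [K] is
   a threshold graph, while [K'], obtained by deleting the edges inside class
   [s + 1], is not.  A C^2 formula of quantifier rank below [s] whose counting
   quantifiers are bounded by [n] cannot tell [K] from [K']: with [r] rounds left,
   Duplicator keeps every pebble either on the vertex Spoiler's pebble occupies, or
   in the central classes [r .. 2s - r] when Spoiler's is, and answers any set of [n]
   choices injectively, moving central vertices to twins in class [r] or [2s - r]
   with the right adjacency to the other pebble. *)

From mathcomp Require Import all_boot zify.
From Stdlib Require Import Classical FunctionalExtensionality.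
Set Implicit Arguments. Unset Strict Implicit. Unset Printing Implicit Defensive.

Section AtLeast.
Variable V : finType.

Lemma at_least_equiv k (Q1 Q2 : V -> Prop) :
  (forall u, Q1 u <-> Q2 u) -> at_least k Q1 <-> at_least k Q2.
Proof. by move=> EQ; split=> -[S [leS HS]]; exists S; split=> // u /HS /EQ. Qed.

Lemma at_least_card k (p : pred V) : at_least k p <-> k <= #|[set u | p u]|.
Proof.
split=> [[S [leS HS]]|le_kp]; last by exists [set u | p u]; split=> // u; rewrite inE.
apply: leq_trans leS (subset_leq_card _).
by apply/subsetP => u /HS; rewrite inE.
Qed.

Lemma at_least_exact k (Q : V -> Prop) :
  at_least k Q -> exists S : {set V}, #|S| = k /\ forall u, u \in S -> Q u.
Proof.
move=> [S [/card_geqP [s [uniq_s size_s sub_s]] HS]].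
exists [set u in s]; split; first by rewrite cardsE (card_uniqP uniq_s).
by move=> u; rewrite inE => /sub_s /HS.
Qed.

Lemma at_least_injP (x0 : V) k (Q : V -> Prop) :
  at_least k Q <-> exists f : nat -> V,
    (forall i j, i < k -> j < k -> f i = f j -> i = j) /\ (forall i, i < k -> Q (f i)).
Proof.
split=> [/at_least_exact [S [cardS HS]]|[f [inj_f Qf]]].
  have size_S : size (enum S) = k by rewrite -cardE.
  exists (nth x0 (enum S)); split=> [i j ltik ltjk Eij|i ltik].
    by apply/eqP; rewrite -(nth_uniq x0 _ _ (enum_uniq (mem S))) ?Eij ?size_S.
  by apply: HS; rewrite -mem_enum mem_nth ?size_S.
exists [set f i | i : 'I_k]; split=> [|u /imsetP [i _ ->]]; last exact: Qf.
rewrite card_imset ?card_ord // => i j /(inj_f _ _ (ltn_ord i) (ltn_ord j)).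
exact: val_inj.
Qed.

Lemma at_least_transfer k (Q1 Q2 : V -> Prop) :
  (forall S : {set V}, #|S| = k -> exists g : V -> V,
     {in S &, injective g} /\ forall u, u \in S -> Q1 u -> Q2 (g u)) ->
  at_least k Q1 -> at_least k Q2.
Proof.
move=> transfer /at_least_exact [S [cardS HS]].
have [g [inj_g Hg]] := transfer S cardS.
exists (g @: S); split=> [|_ /imsetP [u uS ->]]; last exact/Hg/HS.
by rewrite card_in_imset // cardS.
Qed.

End AtLeast.

(** * Translating C^2 into FO and inf-C^2 *)

Section Assignments.
Variable V : Type.

Definition override (a : nat -> V) (m k : nat) (f : nat -> V) : nat -> V :=
  fun z => if m <= z < m + k then f (z - m) else a z.

Lemma override0 a m f : override a m 0 f = a.
Proof. by apply: functional_extensionality => z; rewrite /override addn0; case: leqP. Qed.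

Lemma override_in a m k f i : i < k -> override a m k f (m + i) = f i.
Proof. by move=> ltik; rewrite /override leq_addr ltn_add2l ltik addKn. Qed.

Lemma override_out a m k f z : z < m -> override a m k f z = a z.
Proof. by move=> ltzm; rewrite /override leqNgt ltzm. Qed.

Lemma override_upd a m k f u :
  override (upd eqn a (m + k) u) m k f =
  override a m k.+1 (fun i => if i == k then u else f i).
Proof.
apply: functional_extensionality => z; rewrite /override /upd eqnE.
have [->|neq_z] := eqVneq z (m + k).
  by rewrite ltnn andbF leq_addr addnS ltnSn addKn eqxx.
rewrite addnS ltnS [z <= m + k]leq_eqVlt (negbTE neq_z) /=.
by case: ifP => // /andP [lemz ltz]; rewrite ifF //; apply/negbTE/eqP => Ek; lia.
Qed.

Lemma comp_upd (T : eqType) (b : nat -> V) (rho : T -> nat) x m :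
  (fun v => b (upd eq_op rho x m v)) = upd eq_op (fun v => b (rho v)) x (b m).
Proof. by apply: functional_extensionality => v; rewrite /upd; case: eqP. Qed.

Lemma comp_upd_fresh (rho : var2 -> nat) (a : nat -> V) x m u : (forall v, rho v < m) ->
  (fun v => upd eqn a m u (upd eqb rho x m v)) = upd eqb (fun v => a (rho v)) x u.
Proof.
move=> rho_lt; rewrite (comp_upd (upd eqn a m u) rho x m).
rewrite /upd eqnE eqxx; congr upd; apply: functional_extensionality => v.
by rewrite ltn_eqF.
Qed.

Lemma comp_override_fresh (rho : var2 -> nat) a x m k f i :
  (forall v, rho v < m) -> i < k ->
  (fun v => override a m k f (upd eqb rho x (m + i) v)) =
  upd eqb (fun v => a (rho v)) x (f i).
Proof.
move=> rho_lt ltik; rewrite (comp_upd (override a m k f) rho x (m + i)) override_in //.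
by congr upd; apply: functional_extensionality => v; rewrite override_out.
Qed.

End Assignments.

Section Translations.
Variable d : nat.

Fixpoint IC2_of_C2 (f : C2 d) : IC2 d :=
  match f with
  | C2_E x y => I_E d x y
  | C2_P i x => I_P i x
  | C2_Eq x y => I_Eq d x y
  | C2_Not g => I_Not (IC2_of_C2 g)
  | C2_And g h => I_And (IC2_of_C2 g) (IC2_of_C2 h)
  | C2_Or g h => I_Or (IC2_of_C2 g) (IC2_of_C2 h)
  | C2_Ex x g => I_Ex x (IC2_of_C2 g)
  | C2_All x g => I_All x (IC2_of_C2 g)
  | C2_ExK k x g => I_ExK k x (IC2_of_C2 g)
  end.

Lemma IC2_of_C2_sat (V : finType) (G : graph d V) f a :
  IC2_sat G a (IC2_of_C2 f) <-> C2_sat G a f.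
Proof.
elim: f a => [x y|i x|x y|g IH|g IHg h IHh|g IHg h IHh|x g IH|x g IH|k x g IH] a //=.
- by rewrite IH.
- by rewrite IHg IHh.
- by rewrite IHg IHh.
- by split=> -[u Hu]; exists u; apply/IH.
- by split=> Hu u; apply/IH.
- exact/at_least_equiv.
Qed.

Lemma IC2_of_C2_free f z : IC2_free (IC2_of_C2 f) z <-> C2_free f z.
Proof.
elim: f => [x y|i x|x y|g IH|g IHg h IHh|g IHg h IHh|x g IH|x g IH|k x g IH] //=;
  by rewrite ?IH ?IHg ?IHh.
Qed.

Definition FO_true : FO d := FO_All 0 (FO_Eq d 0 0).

Fixpoint FO_bigand (k : nat) (F : nat -> FO d) : FO d :=
  if k is k'.+1 then FO_And (F k') (FO_bigand k' F) else FO_true.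

Fixpoint FO_exists_block (m k : nat) (body : FO d) : FO d :=
  if k is k'.+1 then FO_Ex (m + k') (FO_exists_block m k' body) else body.

Definition FO_distinct (m k : nat) : FO d :=
  FO_bigand k (fun i => FO_bigand i (fun j => FO_Not (FO_Eq d (m + i) (m + j)))).

(* [rho] sends the two variables of C^2 to FO variables below [m], so the variables
   from [m] on are fresh; [exists_k x. g] asks for [k] distinct witnesses of [g],
   bound to the variables [m], ..., [m + k - 1]. *)
Fixpoint FO_of_C2 (m : nat) (rho : var2 -> nat) (f : C2 d) : FO d :=
  match f with
  | C2_E x y => FO_E d (rho x) (rho y)
  | C2_P i x => FO_P i (rho x)
  | C2_Eq x y => FO_Eq d (rho x) (rho y)
  | C2_Not g => FO_Not (FO_of_C2 m rho g)
  | C2_And g h => FO_And (FO_of_C2 m rho g) (FO_of_C2 m rho h)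
  | C2_Or g h => FO_Or (FO_of_C2 m rho g) (FO_of_C2 m rho h)
  | C2_Ex x g => FO_Ex m (FO_of_C2 m.+1 (upd eqb rho x m) g)
  | C2_All x g => FO_All m (FO_of_C2 m.+1 (upd eqb rho x m) g)
  | C2_ExK k x g => FO_exists_block m k (FO_And (FO_distinct m k)
        (FO_bigand k (fun i => FO_of_C2 (m + k) (upd eqb rho x (m + i)) g)))
  end.

Lemma upd_lt (rho : var2 -> nat) x j m m' :
  m <= m' -> j < m' -> (forall v, rho v < m) -> forall v, upd eqb rho x j v < m'.
Proof.
by move=> lemm' ltj rho_lt v; rewrite /upd; case: eqb => //; apply: leq_trans lemm'.
Qed.

Section Semantics.
Variables (V : finType) (G : graph d V).

Lemma FO_bigand_sat a k F :
  FO_sat G a (FO_bigand k F) <-> forall i, i < k -> FO_sat G a (F i).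
Proof.
elim: k => [|k IH] /=; first by split=> // _ u.
rewrite IH; split=> [[Fk HF] i|HF]; last by split=> [|i /ltnW]; apply: HF.
by rewrite ltnS leq_eqVlt => /predU1P [->|/HF].
Qed.

Lemma FO_distinct_sat a m k :
  FO_sat G a (FO_distinct m k) <->
  forall i j, i < k -> j < k -> a (m + i) = a (m + j) -> i = j.
Proof.
rewrite FO_bigand_sat; split=> [Hd i j ltik ltjk Eij|inj i ltik].
  case: (ltngtP i j) => // [ltij|ltji].
    by move: (Hd j ltjk) => /FO_bigand_sat/(_ i ltij)/(_ (esym Eij)).
  by move: (Hd i ltik) => /FO_bigand_sat/(_ j ltji)/(_ Eij).
apply/FO_bigand_sat => j ltji /= /(inj i j ltik (ltn_trans ltji ltik)) Eij.
by move: ltji; rewrite Eij ltnn.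
Qed.

Lemma FO_exists_block_sat a m k body :
  FO_sat G a (FO_exists_block m k body) <->
  exists f : nat -> V, FO_sat G (override a m k f) body.
Proof.
elim: k a => [|k IH] a /=.
  by split=> [Hb|[f]]; [exists a|]; rewrite override0.
split=> [[u /IH [f]]|[f Hf]].
  by rewrite override_upd; exists (fun i => if i == k then u else f i).
exists (f k); apply/IH; exists f; rewrite override_upd.
suff -> : (fun i => if i == k then f k else f i) = f by [].
by apply: functional_extensionality => i; case: eqP => [->|].
Qed.

Lemma FO_of_C2_sat f m rho a : (forall v, rho v < m) ->
  FO_sat G a (FO_of_C2 m rho f) <-> C2_sat G (fun v => a (rho v)) f.
Proof.
elim: f m rho a => [x y|i x|x y|g IH|g IHg h IHh|g IHg h IHh|x g IH|x g IH|k x g IH]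
  m rho a rho_lt //=.
- by rewrite IH.
- by rewrite IHg ?IHh.
- by rewrite IHg ?IHh.
- setoid_rewrite (IH m.+1 _ _ (upd_lt x (leqnSn m) (ltnSn m) rho_lt)).
  by setoid_rewrite (comp_upd_fresh _ _ _ rho_lt).
- setoid_rewrite (IH m.+1 _ _ (upd_lt x (leqnSn m) (ltnSn m) rho_lt)).
  by setoid_rewrite (comp_upd_fresh _ _ _ rho_lt).
- rewrite FO_exists_block_sat (at_least_injP (a 0)).
  have sat_i f i : i < k ->
      FO_sat G (override a m k f) (FO_of_C2 (m + k) (upd eqb rho x (m + i)) g) <->
      C2_sat G (upd eqb (fun v => a (rho v)) x (f i)) g.
    move=> ltik; rewrite IH ?(comp_override_fresh _ _ _ rho_lt ltik) //.
    by apply: (upd_lt _ (leq_addr k m)); rewrite ?ltn_add2l.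
  have distinct_f f : FO_sat G (override a m k f) (FO_distinct m k) <->
      forall i j, i < k -> j < k -> f i = f j -> i = j.
    by rewrite FO_distinct_sat; split=> inj i j ltik ltjk; move: (inj i j ltik ltjk);
      rewrite !override_in.
  split=> [[f [/distinct_f inj /FO_bigand_sat Hf]]|[f [/distinct_f inj Hf]]];
    exists f; split=> //; last apply/FO_bigand_sat;
    by move=> i ltik; apply/sat_i/Hf.
Qed.

End Semantics.

Lemma FO_bigand_free k F z :
  FO_free (FO_bigand k F) z -> exists2 i, i < k & FO_free (F i) z.
Proof.
elim: k => [|k IH] /=; first by move=> [nz [|]].
by case=> [|/IH [i ltik]]; [exists k | exists i => //; apply: ltnW].
Qed.

Lemma FO_exists_block_free m k body z :
  FO_free (FO_exists_block m k body) z -> ~ (m <= z < m + k) /\ FO_free body z.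
Proof.
elim: k => [|k IH] /=; first by rewrite addn0; case: leqP.
by move=> [neq_z /IH [notin_z ?]]; split=> //; lia.
Qed.

Lemma FO_of_C2_free f m rho z :
  FO_free (FO_of_C2 m rho f) z -> exists2 v, C2_free f v & z = rho v.
Proof.
elim: f m rho => [x y|i x|x y|g IH|g IHg h IHh|g IHg h IHh|x g IH|x g IH|k x g IH] m rho /=.
- by case=> ->; [exists x | exists y]; auto.
- by move=> ->; exists x.
- by case=> ->; [exists x | exists y]; auto.
- exact: IH.
- by case=> [/IHg|/IHh] [v Hv ->]; exists v; auto.
- by case=> [/IHg|/IHh] [v Hv ->]; exists v; auto.
- by move=> [neq_z /IH [v Hv]]; rewrite /upd; case: eqbP => // neq_v ->; exists v.
- by move=> [neq_z /IH [v Hv]]; rewrite /upd; case: eqbP => // neq_v ->; exists v.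
- move=> /FO_exists_block_free [notin_z free_z].
  have fresh i : i < k -> z <> m + i by move=> ltik Ez; apply: notin_z; lia.
  case: free_z => [/FO_bigand_free [i ltik /FO_bigand_free [j ltji [] Ez]]|
                   /FO_bigand_free [i ltik /IH [v Hv]]].
  + by case: (fresh i ltik).
  + by case: (fresh j (ltn_trans ltji ltik)).
  + by rewrite /upd; case: eqbP => [_ /(fresh i ltik)|neq_v ->]; last exists v.
Qed.

End Translations.

Lemma C2_expressible_FO_IC2 d (C : gclass d) (P : node_property d) :
  C2_expressible C P -> FO_expressible C P /\ IC2_expressible C P.
Proof.
move=> [phi [phi_closed phi_sem]]; split.
- exists (FO_of_C2 2 (fun v : var2 => if v then 1 else 0) phi); split.
    by move=> z /FO_of_C2_free [v /phi_closed -> ->].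
  by move=> V G CG a; rewrite FO_of_C2_sat; [apply: phi_sem | case].
- exists (IC2_of_C2 phi); split; first by move=> z /IC2_of_C2_free /phi_closed.
  by move=> V G CG a; rewrite IC2_of_C2_sat; apply: phi_sem.
Qed.

(** * Threshold graphs *)

Section Nested.
Variables (V : finType) (e : rel V).

Definition nested_nbhds : Prop :=
  forall x y : V, x <> y ->
    (forall z, e x z -> z <> y -> e y z) \/ (forall z, e y z -> z <> x -> e x z).

Definition deg (x : V) := #|[set z | e x z]|.

Definition monotone_left (R : nat -> nat -> Prop) :=
  forall i i' j, R i j -> i <= i' -> R i' j.

Hypotheses (e_sym : symmetric e) (e_irr : irreflexive e).

Lemma nested_adj_deg a b b' :
  nested_nbhds -> e a b -> deg b <= deg b' -> a <> b' -> e a b'.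
Proof.
move=> nested e_ab le_deg neq_ab'.
have [<-|neq_bb'] := eqVneq b b'; first by [].
case: (nested b b' (elimN eqP neq_bb')) => [sub|sub]; first by rewrite e_sym sub // e_sym.
apply/negPn/negP => not_e_ab'.
pose Nb := [set z | e b z]; pose Nb' := [set z | e b' z].
have subN : Nb' :\ b \subset (Nb :\ b') :\ a.
  apply/subsetP => z; rewrite !inE => /andP [neq_zb e_b'z].
  rewrite sub //; last exact/eqP.
  by rewrite andbT; apply/andP; split; apply/eqP => Ez; move: e_b'z;
    rewrite Ez ?e_irr // e_sym (negbTE not_e_ab').
have a_in : a \in Nb :\ b' by rewrite !inE e_sym e_ab andbT; apply/eqP.
have le_card := subset_leq_card subN.
have := cardsD1 a (Nb :\ b'); rewrite a_in => card_a.
have card_b : #|Nb'| = (b' \in Nb) + #|Nb' :\ b| by rewrite (cardsD1 b) !inE e_sym.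
move: le_deg; rewrite /deg -/Nb -/Nb' card_b (cardsD1 b' Nb); lia.
Qed.

Lemma nested_nbhdsP :
  nested_nbhds <-> exists R, monotone_left R /\
    forall u w, u <> w -> (e u w <-> R (deg u) (deg w)).
Proof.
split=> [nested|[R [monoR adjR]] x y _].
  exists (fun i j => exists x y, [/\ e x y, deg x <= i & deg y = j]).
  split=> [i i' j [x [y [? le_xi ?]]] le_ii'|u w neq_uw].
    by exists x, y; split=> //; apply: leq_trans le_ii'.
  split=> [e_uw|[x [y [e_xy le_xu Ey]]]]; first by exists u, w.
  have [Eyu|neq_yu] := eqVneq y u; first subst u.
    by apply: (nested_adj_deg nested (b := x)); rewrite 1?e_sym -1?Ey.
  have e_yu : e y u.
    by apply: (nested_adj_deg nested (b := x)); rewrite 1?e_sym //; apply/eqP.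
  by apply: (nested_adj_deg nested (b := y)); rewrite 1?e_sym 1?Ey.
have adj_up u v : deg u <= deg v -> forall z, e u z -> z <> v -> e v z.
  move=> le_uv z e_uz neq_zv.
  have neq_uz : u <> z by move=> Ez; move: e_uz; rewrite Ez e_irr.
  have neq_vz : v <> z by move=> Ez; apply: neq_zv.
  by apply/(adjR _ _ neq_vz); apply: (monoR (deg u)) le_uv; apply/(adjR _ _ neq_uz).
have [le_xy|/ltnW le_yx] := leqP (deg x) (deg y); [left | right]; exact: adj_up.
Qed.

End Nested.

(* Undirected graphs with nested neighbourhoods are the threshold graphs. *)
Definition threshold d : node_property d :=
  fun V G _ => symmetric (edge G) /\ nested_nbhds (edge G).

Lemma pre_symmetricP (T : Type) (e : rel T) : pre_symmetric e <-> symmetric e.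
Proof. by split=> [|sym x y]; [apply: symmetric_from_pre | rewrite sym]. Qed.

Section Formulas.
Variable d : nat.

Definition FO_imp (f g : FO d) := FO_Or (FO_Not f) g.

Definition FO_symmetric : FO d := FO_All 1 (FO_All 2 (FO_imp (FO_E d 1 2) (FO_E d 2 1))).

Definition FO_nested : FO d :=
  FO_All 1 (FO_All 2 (FO_imp (FO_Not (FO_Eq d 1 2))
    (FO_Or (FO_All 3 (FO_imp (FO_E d 1 3) (FO_imp (FO_Not (FO_Eq d 3 2)) (FO_E d 2 3))))
           (FO_All 3 (FO_imp (FO_E d 2 3) (FO_imp (FO_Not (FO_Eq d 3 1)) (FO_E d 1 3))))))).

Definition FO_threshold : FO d := FO_And FO_symmetric FO_nested.

Definition IC2_imp (f g : IC2 d) := I_Or (I_Not f) g.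

Definition IC2_symmetric : IC2 d :=
  I_All vx (I_All vy (IC2_imp (I_E d vx vy) (I_E d vy vx))).

Definition IC2_deg (i : nat) (z : var2) : IC2 d :=
  I_And (I_ExK i (~~ z) (I_E d z (~~ z))) (I_Not (I_ExK i.+1 (~~ z) (I_E d z (~~ z)))).

Definition IC2_deg_rel (R : nat -> nat -> Prop) : IC2 d :=
  I_BigOr (fun p : {p : nat * nat | R p.1 p.2} =>
    I_And (IC2_deg (sval p).1 vx) (IC2_deg (sval p).2 vy)).

Definition IC2_adj_by (R : nat -> nat -> Prop) : IC2 d :=
  I_All vx (I_All vy (IC2_imp (I_Not (I_Eq d vx vy))
    (I_And (IC2_imp (I_E d vx vy) (IC2_deg_rel R))
           (IC2_imp (IC2_deg_rel R) (I_E d vx vy))))).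

Definition IC2_threshold : IC2 d :=
  I_And IC2_symmetric (I_BigOr (fun R : {R | monotone_left R} => IC2_adj_by (sval R))).

Arguments FO_imp : simpl never.
Arguments IC2_imp : simpl never.
Arguments IC2_deg : simpl never.
Arguments IC2_deg_rel : simpl never.

Section Semantics.
Variables (V : finType) (G : graph d V).

Lemma FO_imp_sat a f g : FO_sat G a (FO_imp f g) <-> (FO_sat G a f -> FO_sat G a g).
Proof. by split; [apply: or_to_imply | apply: imply_to_or]. Qed.

Lemma IC2_imp_sat a f g : IC2_sat G a (IC2_imp f g) <-> (IC2_sat G a f -> IC2_sat G a g).
Proof. by split; [apply: or_to_imply | apply: imply_to_or]. Qed.

Lemma FO_threshold_sat a : FO_sat G a FO_threshold <-> threshold G (a 0).
Proof.
rewrite /FO_threshold /FO_symmetric /FO_nested; cbn.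
repeat (setoid_rewrite FO_imp_sat; cbn).
by rewrite /threshold -pre_symmetricP.
Qed.

Lemma IC2_deg_sat a i z : IC2_sat G a (IC2_deg i z) <-> deg (edge G) (a z) = i.
Proof.
have -> : IC2_sat G a (IC2_deg i z) <->
          at_least i (edge G (a z)) /\ ~ at_least i.+1 (edge G (a z)) by case: z.
rewrite !at_least_card; split=> [[le_i /negP]|<-]; last by rewrite ltnn.
by rewrite -ltnNge ltnS => ge_i; apply/eqP; rewrite eqn_leq le_i ge_i.
Qed.

Lemma IC2_deg_rel_sat a R :
  IC2_sat G a (IC2_deg_rel R) <-> R (deg (edge G) (a vx)) (deg (edge G) (a vy)).
Proof.
rewrite /IC2_deg_rel; cbn; split=> [[[[i j] Rij]]|Rxy].
  by cbn; rewrite !IC2_deg_sat => -[-> ->].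
by exists (exist _ (_, _) Rxy); cbn; rewrite !IC2_deg_sat.
Qed.

Lemma IC2_threshold_sat a : IC2_sat G a IC2_threshold <-> threshold G (a vx).
Proof.
rewrite /IC2_threshold /IC2_symmetric /IC2_adj_by; cbn.
repeat (setoid_rewrite IC2_imp_sat; cbn).
setoid_rewrite IC2_deg_rel_sat; cbn.
rewrite /threshold -pre_symmetricP.
have iff_nested := nested_nbhdsP (symmetric_from_pre _) (@edge_noloop d V G).
split=> -[sym adj]; split=> //.
  have [[R monoR] adjR] := adj.
  by apply/iff_nested => //; exists R; split=> // u w /adjR [].
have [R [monoR adjR]] := (iff_nested sym).1 adj.
by exists (exist _ R monoR) => u w /adjR [].
Qed.

End Semantics.

Lemma threshold_FO_expressible (C : gclass d) : FO_expressible C (@threshold d).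
Proof.
exists FO_threshold; split=> [z|V G _ a]; last exact: FO_threshold_sat.
by rewrite /FO_threshold /FO_symmetric /FO_nested /FO_imp /=; lia.
Qed.

Lemma threshold_IC2_expressible (C : gclass d) : IC2_expressible C (@threshold d).
Proof.
exists IC2_threshold; split=> [z|V G _ a]; last exact: IC2_threshold_sat.
by move=> /= [[nx [ny _]]|[R [nx [ny _]]]]; case: z nx ny.
Qed.

End Formulas.

(** * The twin graphs and the counting game *)

Section TwinGraphs.
Variables (d s n : nat).

Definition vertex := ('I_(s.*2).+1 * 'I_n.+2)%type.
Definition cls (u : vertex) : nat := u.1.

Definition kedge (b : bool) : rel vertex := fun u w =>
  [&& u != w, (s.*2).+1 <= cls u + cls w & ~~ [&& b, cls u == s.+1 & cls w == s.+1]].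

Lemma kedge_irr b : irreflexive (kedge b).
Proof. by move=> u; rewrite /kedge eqxx. Qed.

Lemma kedge_sym b : symmetric (kedge b).
Proof. by move=> u w; rewrite /kedge eq_sym addnC [(cls u == _) && _]andbC. Qed.

Definition Kgraph b : graph d vertex :=
  @Graph d vertex (kedge b) (fun _ _ => false) (@kedge_irr b).

Lemma kedgeE b u w :
  cls w != s.+1 -> kedge b u w = (u != w) && ((s.*2).+1 <= cls u + cls w).
Proof. by move=> /negbTE cls_w; rewrite /kedge cls_w !andbF andbT. Qed.

Definition central r i := (r <= i) && (i + r <= s.*2).

Lemma central_down r i : central r.+1 i -> central r i.
Proof. rewrite /central; lia. Qed.

Lemma central_middle r : r.+2 <= s -> central r.+1 s.+1.
Proof. rewrite /central; lia. Qed.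

Lemma cls_inord k (c : 'I_n.+2) : k <= s.*2 -> cls (inord k, c) = k.
Proof. by move=> le_k; rewrite /cls /= inordK. Qed.

(* With [r] rounds left, Duplicator may answer a central vertex by any central one,
   and any other vertex by itself. *)
Definition close r (u w : vertex) :=
  if central r (cls u) then central r (cls w) else u == w.

Lemma close_refl r u : close r u u.
Proof. by rewrite /close; case: ifP. Qed.

Lemma close_sym r u w : close r u w -> close r w u.
Proof. by rewrite /close; case: ifP => [cu cw | cu /eqP <-]; rewrite ?cw ?cu. Qed.

Definition pos_match r b1 b2 (u1 u2 w1 w2 : vertex) :=
  [&& (u1 == u2) == (w1 == w2), kedge b1 u1 u2 == kedge b2 w1 w2,
      close r u1 w1 & close r u2 w2].

Lemma pos_match_swap r b1 b2 u1 u2 w1 w2 :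
  pos_match r b1 b2 u1 u2 w1 w2 = pos_match r b1 b2 u2 u1 w2 w1.
Proof.
rewrite /pos_match (eq_sym u1) (eq_sym w1) (kedge_sym b1 u1) (kedge_sym b2 w1).
by rewrite [close r u1 w1 && _]andbC.
Qed.

Lemma pos_match_sym r b1 b2 u1 u2 w1 w2 :
  pos_match r b1 b2 u1 u2 w1 w2 -> pos_match r b2 b1 w1 w2 u1 u2.
Proof.
case/and4P => /eqP E1 /eqP E2 c1 c2.
by apply/and4P; split; [rewrite E1 | rewrite E2 | apply: close_sym..].
Qed.

Lemma forth_fixed r b1 b2 p u :
  r.+2 <= s -> ~~ central r.+1 (cls p) -> pos_match r b1 b2 u p u p.
Proof.
move=> le_rs cp; rewrite /pos_match !eqxx !close_refl /= andbT.
have cls_p : cls p != s.+1 by apply: contraNneq cp => ->; apply: central_middle.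
by rewrite !kedgeE.
Qed.

Lemma adj_noncentral r i j :
  central r.+1 j -> ~~ central r i -> ((s.*2).+1 <= j + i) = (r <= i).
Proof. by rewrite /central => cj ci; apply/idP/idP; lia. Qed.

Lemma adj_target r j (c : bool) :
  central r.+1 j -> ((s.*2).+1 <= (if c then s.*2 - r else r) + j) = c.
Proof. by rewrite /central; case: c => cj; apply/idP/idP; lia. Qed.

Section Relocate.
Variables (r : nat) (b1 : bool) (p q : vertex) (S : {set vertex}).
Hypotheses (le_rs : r.+2 <= s) (le_Sn : #|S| <= n).
Hypotheses (cp : central r.+1 (cls p)) (cq : central r.+1 (cls q)).

Definition target u := if kedge b1 u p then s.*2 - r else r.

(* Central vertices other than [p] go to pairwise distinct twins in class [r] or
   [2s - r], chosen so that adjacency to [q] matches adjacency to [p]. *)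
Definition relocate (u : vertex) : vertex :=
  if u == p then q
  else if central r (cls u) then (inord (target u), inord (index u (enum S))) else u.

Lemma central_target u : central r (target u) && ~~ central r.+1 (target u).
Proof. by rewrite /target /central; case: ifP; lia. Qed.

Lemma cls_relocate u : u != p -> central r (cls u) -> cls (relocate u) = target u.
Proof.
by move=> /negbTE up cu; rewrite /relocate up cu cls_inord // /target; case: ifP; lia.
Qed.

(* Tells apart the three branches of [relocate]. *)
Definition level (w : vertex) : nat := central r (cls w) + central r.+1 (cls w).

Lemma level_relocate u :
  level (relocate u) = if u == p then 2 else if central r (cls u) then 1 else 0.
Proof.
rewrite /level; case: (eqVneq u p) => [->|up].
  by rewrite /relocate eqxx cq (central_down cq).
case: ifP => cu.
  by rewrite cls_relocate //; case/andP: (central_target u) => -> /negbTE ->.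
rewrite /relocate (negbTE up) !cu.
by case: (boolP (central r.+1 (cls u))) => // /central_down; rewrite cu.
Qed.

Lemma relocate_inj : {in S &, injective relocate}.
Proof.
move=> u v uS vS Euv; have := congr1 level Euv; rewrite !level_relocate.
case: (eqVneq u p) => [->|up]; case: (eqVneq v p) => [->|vp] //; do 2?case: ifP => //.
  move=> cv cu _; move: Euv; rewrite /relocate (negbTE up) (negbTE vp) cu cv => -[_].
  have index_lt w : w \in S -> index w (enum S) < n.+2.
    by move=> wS; apply: leq_trans (leqW (leqW le_Sn)); rewrite cardE index_mem mem_enum.
  move/(congr1 val); rewrite /= !inordK ?index_lt // => Eidx.
  have u_in : u \in enum S by rewrite mem_enum.
  by rewrite -(nth_index u u_in) Eidx nth_index ?mem_enum.
by move=> cv cu _; move: Euv; rewrite /relocate (negbTE up) (negbTE vp) cu cv.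
Qed.

Lemma relocate_match b2 u : pos_match r b1 b2 u p (relocate u) q.
Proof.
have cpq : close r p q by rewrite /close (central_down cp) (central_down cq).
rewrite /pos_match cpq andbT.
have [->|up] := eqVneq u p; first by rewrite /relocate !eqxx !kedge_irr.
have middle_ne w : ~~ central r.+1 w -> w != s.+1.
  by apply: contraNneq => ->; apply: central_middle.
case: (boolP (central r (cls u))) => cu.
  have /andP [ct nct] := central_target u.
  have Ecls := cls_relocate up cu.
  have uq : relocate u != q by apply: contraNneq nct => Eq; rewrite -Ecls Eq.
  rewrite (negbTE uq) /close cu Ecls ct andbT /=.
  rewrite (kedge_sym b2) (kedgeE b2 q) Ecls ?middle_ne // (eq_sym q) uq.
  by rewrite addnC /target adj_target.
have uq : u != q by apply: contraNneq cu => ->; apply: central_down.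
have cls_u : cls u != s.+1 by apply: middle_ne; apply: contraNN cu; apply: central_down.
rewrite /relocate (negbTE up) (negbTE cu) (negbTE uq) close_refl /=.
rewrite !(kedge_sym _ u) !kedgeE // (adj_noncentral cp cu) (adj_noncentral cq cu).
by rewrite [p == u]eq_sym [q == u]eq_sym up uq eqxx.
Qed.

End Relocate.

Lemma forth r b1 b2 p q (S : {set vertex}) :
  r.+2 <= s -> #|S| <= n -> close r.+1 p q ->
  exists g : vertex -> vertex,
    {in S &, injective g} /\ forall u, pos_match r b1 b2 u p (g u) q.
Proof.
move=> le_rs le_Sn; rewrite /close; case: ifP => [cp cq | /negbT cp /eqP <-].
  by exists (relocate r b1 p q S); split; [apply: relocate_inj | apply: relocate_match].
by exists id; split=> [u v _ _ //|u]; apply: forth_fixed.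
Qed.

Definition game_pos r b1 b2 (a c : var2 -> vertex) :=
  pos_match r b1 b2 (a vx) (a vy) (c vx) (c vy).

Section GamePositions.
Variables (r : nat) (b1 b2 : bool) (a c : var2 -> vertex).
Hypothesis pos : game_pos r b1 b2 a c.

Lemma game_pos_sym : game_pos r b2 b1 c a.
Proof. exact: pos_match_sym. Qed.

Lemma game_pos_eq x y : (a x == a y) = (c x == c y).
Proof.
case/and4P: pos => /eqP E _ _ _.
by case: x; case: y; rewrite ?eqxx // eq_sym E eq_sym.
Qed.

Lemma game_pos_edge x y : kedge b1 (a x) (a y) = kedge b2 (c x) (c y).
Proof.
case/and4P: pos => _ /eqP E _ _.
by case: x; case: y; rewrite ?kedge_irr // kedge_sym E kedge_sym.
Qed.

End GamePositions.

Lemma game_pos_forth r b1 b2 a c x (S : {set vertex}) :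
  r.+2 <= s -> #|S| <= n -> game_pos r.+1 b1 b2 a c ->
  exists g : vertex -> vertex, {in S &, injective g} /\
    forall u, game_pos r b1 b2 (upd eqb a x u) (upd eqb c x (g u)).
Proof.
move=> le_rs le_Sn pos.
have close_other : close r.+1 (a (~~ x)) (c (~~ x)) by case/and4P: pos => _ _; case: x.
have [g [inj_g match_g]] := forth b1 b2 le_rs le_Sn close_other.
exists g; split=> // u; move: (match_g u); clear match_g close_other.
by case: x; rewrite /game_pos /upd //= pos_match_swap.
Qed.

Lemma game_pos_forth1 r b1 b2 a c x u :
  r.+2 <= s -> 0 < n -> game_pos r.+1 b1 b2 a c ->
  exists w, game_pos r b1 b2 (upd eqb a x u) (upd eqb c x w).
Proof.
move=> le_rs lt0n pos; have le_1n : #|[set u]| <= n by rewrite cards1.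
by have [g [_ Hg]] := game_pos_forth x le_rs le_1n pos; exists (g u).
Qed.

End TwinGraphs.

Section Rank.
Variable d : nat.

Fixpoint C2_rank (f : C2 d) : nat :=
  match f with
  | C2_Not g => C2_rank g
  | C2_And g h | C2_Or g h => maxn (C2_rank g) (C2_rank h)
  | C2_Ex _ g | C2_All _ g | C2_ExK _ _ g => (C2_rank g).+1
  | _ => 0
  end.

Fixpoint C2_count (f : C2 d) : nat :=
  match f with
  | C2_Not g => C2_count g
  | C2_And g h | C2_Or g h => maxn (C2_count g) (C2_count h)
  | C2_Ex _ g | C2_All _ g => C2_count g
  | C2_ExK k _ g => maxn k (C2_count g)
  | _ => 0
  end.

End Rank.

Section Invariance.
Variables (d s n : nat).
Hypothesis n_gt0 : 0 < n.

Notation sat b := (C2_sat (Kgraph d s n b)).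

Lemma game_pos_C2_sat f r b1 b2 a c :
  C2_rank f <= r -> r < s -> C2_count f <= n -> game_pos r b1 b2 a c ->
  sat b1 a f <-> sat b2 c f.
Proof.
elim: f r b1 b2 a c => [x y|i x|x y|g IH|g IHg h IHh|g IHg h IHh|x g IH|x g IH|k x g IH]
  r b1 b2 a c /=; rewrite ?geq_max.
- by move=> _ _ _ pos; rewrite (game_pos_edge pos).
- by [].
- move=> _ _ _ pos; have E := game_pos_eq pos x y.
  by split=> /eqP; [rewrite E | rewrite -E] => /eqP.
- by move=> rk lt_rs cnt pos; rewrite (IH r b1 b2 a c).
- move=> /andP [rkg rkh] lt_rs /andP [cg ch] pos.
  by rewrite (IHg r b1 b2 a c) // (IHh r b1 b2 a c).
- move=> /andP [rkg rkh] lt_rs /andP [cg ch] pos.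
  by rewrite (IHg r b1 b2 a c) // (IHh r b1 b2 a c).
- case: r => // r rk lt_rs cnt.
  suff ex_dir b1' b2' a' c' : game_pos r.+1 b1' b2' a' c' ->
      (exists u, sat b1' (upd eqb a' x u) g) -> exists w, sat b2' (upd eqb c' x w) g.
    by move=> pos; split; apply: ex_dir; [|apply: game_pos_sym].
  move=> pos [u Hu]; have [w pos'] := game_pos_forth1 x u lt_rs n_gt0 pos.
  by exists w; apply/(IH r _ _ _ _ rk (ltnW lt_rs) cnt pos').
- case: r => // r rk lt_rs cnt.
  suff all_dir b1' b2' a' c' : game_pos r.+1 b1' b2' a' c' ->
      (forall u, sat b1' (upd eqb a' x u) g) -> forall w, sat b2' (upd eqb c' x w) g.
    by move=> pos; split; apply: all_dir; [|apply: game_pos_sym].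
  move=> pos Hu w; have [u pos'] := game_pos_forth1 x w lt_rs n_gt0 (game_pos_sym pos).
  by apply/(IH r _ _ _ _ rk (ltnW lt_rs) cnt pos').
- case: r => // r rk lt_rs /andP [le_kn cnt].
  suff count_dir b1' b2' a' c' : game_pos r.+1 b1' b2' a' c' ->
      at_least k (fun u => sat b1' (upd eqb a' x u) g) ->
      at_least k (fun w => sat b2' (upd eqb c' x w) g).
    by move=> pos; split; apply: count_dir; [|apply: game_pos_sym].
  move=> pos; apply: at_least_transfer => S cardS.
  have [h [inj_h pos']] := game_pos_forth x lt_rs (leq_trans (eq_leq cardS) le_kn) pos.
  exists h; split=> // u _; exact: (IH r _ _ _ _ rk (ltnW lt_rs) cnt (pos' u)).1.
Qed.

End Invariance.

Section Threshold.
Variables (d s n : nat).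

Lemma Kgraph_false_threshold v : threshold (Kgraph d s n false) v.
Proof.
split=> [|x y _]; first exact: kedge_sym.
have up u w : cls u <= cls w -> forall z, kedge false u z -> z <> w -> kedge false w z.
  move=> le_uw z; rewrite /kedge !andbT => /andP [_ le_uz] neq_zw.
  apply/andP; split; first by rewrite eq_sym; apply/eqP.
  by apply: leq_trans le_uz _; rewrite leq_add2r.
by have [/up|/ltnW/up] := leqP (cls x) (cls y); [left | right].
Qed.

Lemma Kgraph_true_not_threshold v : 0 < s -> ~ threshold (Kgraph d s n true) v.
Proof.
move=> s_gt0 [_ nested].
(* [z] is a neighbour of [x] but not of [y], and [w] one of [y] but not of [x]. *)
pose x : vertex s n := (inord s, inord 0); pose w : vertex s n := (inord s, inord 1).
pose y : vertex s n := (inord s.+1, inord 0); pose z : vertex s n := (inord s.+1, inord 1).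
have [cx cw cy cz] : [/\ cls x = s, cls w = s, cls y = s.+1 & cls z = s.+1].
  by split; apply: cls_inord; lia.
have ord01 : (inord 0 : 'I_n.+2) != inord 1.
  by apply/eqP => /(congr1 (@nat_of_ord _)); rewrite !inordK.
have neq_cls (u u' : vertex s n) : cls u != cls u' -> u != u' by apply: contraNneq => ->.
have neq_xy : x <> y by apply/eqP/neq_cls; rewrite cx cy; lia.
have e_xz : kedge true x z by rewrite /kedge cx cz neq_cls ?cx ?cz; lia.
have e_yw : kedge true y w by rewrite /kedge cy cw neq_cls ?cy ?cw; lia.
have ne_yz : ~~ kedge true y z by rewrite /kedge cy cz eqxx !andbF.
have ne_xw : ~~ kedge true x w by rewrite /kedge cx cw; lia.
have twins i : ((inord i, inord 1) : vertex s n) <> (inord i, inord 0).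
  by apply/eqP; rewrite xpair_eqE negb_and eq_sym ord01 orbT.
have [sub|sub] := nested x y neq_xy.
  by apply: (negP ne_yz); exact: sub z e_xz (twins _).
by apply: (negP ne_xw); exact: sub w e_yw (twins _).
Qed.

End Threshold.

Lemma threshold_not_C2_expressible d (C : gclass d) :
  (forall s n b, C _ (Kgraph d s n b)) -> ~ C2_expressible C (@threshold d).
Proof.
move=> CK [phi [_ phi_sem]].
pose s := (C2_rank phi).+2; pose n := (C2_count phi).+1.
pose a := fun _ : var2 => (ord0, ord0) : vertex s n.
have pos : game_pos (C2_rank phi) false true a a.
  by rewrite /game_pos /pos_match /a /= close_refl.
have := game_pos_C2_sat (ltn0Sn _) (leqnn _) (leqnSn _) (leqnSn _) pos.
rewrite (phi_sem _ _ (CK s n false)) (phi_sem _ _ (CK s n true)) => /iffLR.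
by move/(_ (Kgraph_false_threshold _ _)); apply: Kgraph_true_not_threshold.
Qed.

Theorem theorem7 (d : nat) :
  strict_gain (all_graphs d) /\ strict_gain (undirected_graphs d).
Proof.
have gain C : (forall s n b, C _ (Kgraph d s n b)) -> strict_gain C.
  move=> CK; split=> [P|]; first exact: C2_expressible_FO_IC2.
  exists (@threshold d); split; first exact: threshold_FO_expressible.
  by split; [apply: threshold_IC2_expressible | apply: threshold_not_C2_expressible].
by split; apply: gain => // s n b; apply: kedge_sym.
Qed.
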